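(* In the setting of the lemma on the linear representation of the forward difference (i.e. $\alpha,\beta>0$, $g(n)=\sum_{i=0}^kc_in^i$ with $c_k\ne0$, and $A_0,A_1\in\mathbb{C}^{(k+2)\times(k+2)}$ the upper triangular matrices defined there), assume $k\ge1$ and let $C=A_0+A_1$. Then the joint spectral radius of $\{A_0,A_1\}$ equals $\max\{\alpha,\beta,2^{k-1}\}$, and the set of eigenvalues of $C$ is $\{\alpha+\beta,2^k,2^{k-1},\dots,2,1\}$. If $\max\{\alpha,\beta\}\ne2^{k-1}$, then $\{A_0,A_1\}$ has the simple growth property.
   Context: Here, with $d_0=(1-\beta)x(1)-g(1)+g(0)$, $d_1=g(1)-(1-\beta)x(1)$, $b_{0j}=\sum_{i=j+1}^k\binom ij2^jc_i$, $b_{1j}=\sum_{i=j+1}^k\binom ij(2^i-2^j)c_i$, $a_{0ij}=[j=i]2^i$, $a_{1ij}=\binom ij2^j$ ($0\le i,j<k$), $b_r=(b_{r(k-1)},\dots,b_{r0})$, $\widetilde A_r=(a_{rij})_{i,j=k-1,\dots,0}$, $\mu_0=\beta$, $\mu_1=\alpha$, one has $A_r=\begin{pmatrix}\mu_r&b_r&d_r\\0&\widetilde A_r&0\\0&0&[r=0]\end{pmatrix}$ for $r\in\{0,1\}$. Joint spectral radius of a finite set $G$ of square matrices: $\rho(G)=\lim_{k\to\infty}\sup\{\|G_1\cdots G_k\|^{1/k}:G_i\in G\}$ for an induced norm. $G$ has the simple growth property if $\|G_1\cdots G_k\|=O(\rho(G)^k)$ uniformly for $G_i\in G$ as $k\to\infty$.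 $[S]$ is the Iverson bracket. *)

From HB Require Import structures.
From mathcomp Require Import all_boot all_order all_algebra.
From mathcomp Require Import complex.
From mathcomp Require Import all_classical all_reals all_analysis.
Set Implicit Arguments. Unset Strict Implicit. Unset Printing Implicit Defensive.
Import Order.TTheory GRing.Theory Num.Theory.
Import numFieldNormedType.Exports.
Local Open Scope ring_scope.
Local Open Scope classical_set_scope.

Definition cabs (R : realType) (z : R[i]) : R := ComplexField.Normc.normc z.

Definition gpoly (R : realType) (k : nat) (c : nat -> R[i]) (n : nat) : R[i] :=
  \sum_(i < k.+1) c i * (n%:R) ^+ i.

Definition bcoef (R : realType) (k : nat) (c : nat -> R[i]) (r : bool) (j : nat)
  : R[i] :=
  \sum_(j.+1 <= i < k.+1)
     ('C(i, j)%:R * (if r then (2 ^ i - 2 ^ j)%:R else (2 ^ j)%:R) * c i).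

Definition acoef (R : realType) (r : bool) (i j : nat) : R[i] :=
  if r then ('C(i, j) * 2 ^ j)%:R else (if j == i then (2 ^ i)%:R else 0).

(* d_0 and d_1, with x1 = x(1) *)
Definition dcoef (R : realType) (k : nat) (c : nat -> R[i]) (beta : R)
  (x1 : R[i]) (r : bool) : R[i] :=
  if r then gpoly k c 1 - (1 - (beta%:C)%C) * x1
  else (1 - (beta%:C)%C) * x1 - gpoly k c 1 + gpoly k c 0.

(* The (k+2)x(k+2) matrix A_r (r = false <-> r = 0, r = true <-> r = 1).
   Row/column index p : 'I_(k+2):  p = 0 is the first row/column (mu_r, b_r, d_r),
   p = 1..k correspond to i = k - p (i.e. i = k-1, ..., 0, descending order as in
   the paper), and p = k+1 is the last row/column. *)
Definition Amat (R : realType) (k : nat) (c : nat -> R[i]) (alpha beta : R)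
  (x1 : R[i]) (r : bool) : 'M[R[i]]_(k.+2) :=
  \matrix_(p, q)
    (if p == 0 :> nat then
       (if q == 0 :> nat then (if r then (alpha%:C)%C else (beta%:C)%C)
        else if q == k.+1 :> nat then dcoef k c beta x1 r
        else bcoef k c r (k - q))
     else if p == k.+1 :> nat then
       (if (q == k.+1 :> nat) && ~~ r then 1 else 0)
     else
       (if (q == 0 :> nat) || (q == k.+1 :> nat) then 0
        else acoef R r (k - p) (k - q))).

(* Induced matrix norm: the operator norm induced by the max-norm on C^n
   (maximal absolute row sum). *)
Definition mxnorm (R : realType) (n : nat) (M : 'M[R[i]]_n) : R :=
  \big[Num.max/0]_(p < n) \sum_(q < n) cabs (M p q).

Definition wordprod (R : realType) (n : nat) (G : bool -> 'M[R[i]]_n.+1)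
  (m : nat) (w : {ffun 'I_m -> bool}) : 'M[R[i]]_n.+1 :=
  \prod_(l < m) G (w l).

Definition supnorm (R : realType) (n : nat) (G : bool -> 'M[R[i]]_n.+1)
  (m : nat) : R :=
  \big[Num.max/0]_(w : {ffun 'I_m -> bool}) mxnorm (wordprod G w).

Definition jsr_is (R : realType) (n : nat) (G : bool -> 'M[R[i]]_n.+1) (rho : R)
  : Prop :=
  (fun m : nat => supnorm G m `^ (m%:R)^-1) @ \oo --> rho.

Definition simple_growth (R : realType) (n : nat) (G : bool -> 'M[R[i]]_n.+1)
  (rho : R) : Prop :=
  exists M : R, forall (m : nat) (w : {ffun 'I_m -> bool}),
    mxnorm (wordprod G w) <= M * rho ^+ m.

(* All matrices involved are upper triangular, so the diagonal of a product
   is the product of the diagonals and the eigenvalues of [A_0 + A_1] are its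
   diagonal entries [alpha + beta, 2^k, ..., 2, 1].  For such a family the
   joint spectral radius is the largest diagonal modulus: constant words give
   the lower bound, and a weighted max-row-sum norm with geometrically
   decreasing weights, which makes the off-diagonal part as small as wanted,
   gives the upper bound.  The same weighted estimate yields products of size
   [O(rho^m)] as soon as the rows whose diagonal modulus equals [rho] cannot
   feed one another; this is the case here unless [max(alpha, beta)] and
   [2^(k-1)] (rows 0 and 1) tie. *)

From HB Require Import structures.
From mathcomp Require Import all_boot all_order all_algebra.
From mathcomp Require Import complex.
From mathcomp Require Import all_classical all_reals all_analysis.
From mathcomp Require Import ring lra zify.
Import Order.TTheory GRing.Theory Num.Theory.
Local Open Scope ring_scope.

Section ComplexModulus.
Context {R : realType}.
Implicit Types x y : R[i].

Lemma cabs_ge0 x : 0 <= cabs x.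
Proof. by case: x => a b; exact: sqrtr_ge0. Qed.

Lemma cabs0 : cabs (0 : R[i]) = 0.
Proof. exact: ComplexField.Normc.normc0. Qed.

Lemma cabsM x y : cabs (x * y) = cabs x * cabs y.
Proof. exact: ComplexField.Normc.normcM. Qed.

Lemma cabs_real (r : R) : cabs (r%:C)%C = `|r|.
Proof. by rewrite /cabs /= expr0n /= addr0 sqrtr_sqr. Qed.

Lemma cabs_nat n : cabs (n%:R : R[i]) = n%:R.
Proof. by rewrite -(rmorph_nat (real_complex R)) cabs_real ger0_norm. Qed.

Lemma cabs_sum {I : finType} (P : pred I) (F : I -> R[i]) :
  cabs (\sum_(i | P i) F i) <= \sum_(i | P i) cabs (F i).
Proof.
elim/big_ind2: _ => [|x1 x2 y1 y2 h1 h2|//]; first by rewrite cabs0.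
exact: le_trans (le_normcD x2 y2) (lerD h1 h2).
Qed.

Lemma cabs_prod {I : finType} (F : I -> R[i]) :
  cabs (\prod_i F i) = \prod_i cabs (F i).
Proof.
elim/big_rec2: _ => [|i y1 y2 _ <-]; first exact: ComplexField.Normc.normc1.
by rewrite cabsM.
Qed.

End ComplexModulus.

Definition upper_triangular (R : nzRingType) n (M : 'M[R]_n) :=
  forall p q : 'I_n, (q < p)%N -> M p q = 0.
Arguments upper_triangular {R n}.

Section UpperTriangular.
Context {R : nzRingType} {n : nat}.
Implicit Types M N : 'M[R]_n.+1.

Lemma mxE_mul M N p q : (M * N) p q = \sum_s M p s * N s q.
Proof. by rewrite -mulmxE mxE. Qed.

Lemma upper_triangular1 : upper_triangular (1 : 'M[R]_n.+1).
Proof. by move=> p q qp; rewrite mxE -val_eqE (gtn_eqF qp). Qed.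

Lemma upper_triangularM M N :
  upper_triangular M -> upper_triangular N -> upper_triangular (M * N).
Proof.
move=> uM uN p q qp; rewrite mxE_mul big1 // => s _.
have [sp|ps] := ltnP s p; first by rewrite uM ?mul0r.
by rewrite uN ?mulr0 // (leq_trans qp ps).
Qed.

Lemma upper_triangular_mul_diag M N p :
  upper_triangular M -> upper_triangular N -> (M * N) p p = M p p * N p p.
Proof.
move=> uM uN; rewrite mxE_mul (bigD1 p) //= big1 ?addr0 // => s sp.
have [lt_sp|lt_ps] := ltnP s p; first by rewrite uM ?mul0r.
by rewrite uN ?mulr0 // ltn_neqAle eq_sym sp.
Qed.

Lemma upper_triangular_prod m (F : 'I_m -> 'M[R]_n.+1) :
  (forall l, upper_triangular (F l)) -> upper_triangular (\prod_l F l).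
Proof.
move=> uF; apply: (big_ind upper_triangular) => //.
  exact: upper_triangular1.
exact: upper_triangularM.
Qed.

Lemma upper_triangular_prod_diag m (F : 'I_m -> 'M[R]_n.+1) p :
  (forall l, upper_triangular (F l)) -> (\prod_l F l) p p = \prod_l F l p p.
Proof.
elim: m F => [|m IH] F uF; first by rewrite !big_ord0 mxE eqxx.
rewrite !big_ord_recl upper_triangular_mul_diag ?IH //.
exact: upper_triangular_prod.
Qed.

End UpperTriangular.

Lemma eigenvalue_upper_triangular (F : fieldType) n (M : 'M[F]_n) z :
  upper_triangular M -> eigenvalue M z = [exists p, z == M p p].
Proof.
move=> uM; have trigMT : is_trig_mx M^T.
  by apply/is_trig_mxP => i j ij; rewrite mxE uM.
rewrite eigenvalue_root_char.
have -> : char_poly M = char_poly M^T.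
  by rewrite /char_poly -det_tr; congr (\det _); apply/matrixP => i j; rewrite !mxE eq_sym.
rewrite char_poly_trig // rootE horner_prod.
apply/eqP/existsP => [/eqP/prodf_eq0[p _] | [p /eqP->]].
  by rewrite hornerXsubC mxE subr_eq0 => zp; exists p.
by apply/eqP/prodf_eq0; exists p => //; rewrite hornerXsubC mxE subrr.
Qed.

Lemma ler_sum_subset {R : numDomainType} {I : finType} (P Q : pred I) (F : I -> R) :
  (forall i, 0 <= F i) -> {subset P <= Q} -> \sum_(i | P i) F i <= \sum_(i | Q i) F i.
Proof.
move=> F_ge0 PQ; rewrite [leRHS](bigID P) /= (eq_bigl P) ?lerDl ?sumr_ge0 //.
by move=> i; apply/andb_idl/PQ.
Qed.

Lemma ler_sum_term {R : numDomainType} {I : finType} (F : I -> R) j :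
  (forall i, 0 <= F i) -> F j <= \sum_i F i.
Proof. by move=> F_ge0; rewrite -(@big_pred1_eq R 0 +%R _ j) ler_sum_subset. Qed.

Lemma exists_uniform_gap {R : realFieldType} {T : finType} (P : pred T) (x y : T -> R) :
  (forall t, P t -> x t < y t) -> exists2 d : R, 0 < d & forall t, P t -> x t + d <= y t.
Proof.
move=> lt_xy; exists (\big[Num.min/1]_(t | P t) (y t - x t)).
  elim/big_ind: _ => // [a b a0 b0|t /lt_xy]; last by rewrite subr_gt0.
  by rewrite lt_min a0.
move=> t Pt; rewrite addrC -lerBrDr (bigD1 t) //=.
by rewrite ge_min lexx.
Qed.

Section WeightedRowSums.
Variables (R : realType) (n : nat) (w : 'I_n.+1 -> R).
Hypothesis w_ge0 : forall q, 0 <= w q.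

Lemma weighted_rowsum_mul (M N : 'M[R[i]]_n.+1) p :
  \sum_q cabs ((M * N) p q) * w q
    <= \sum_s cabs (M p s) * (\sum_q cabs (N s q) * w q).
Proof.
apply: (@le_trans _ _ (\sum_q \sum_s cabs (M p s) * cabs (N s q) * w q)).
  apply: ler_sum => q _; rewrite -mulr_suml ler_wpM2r // mxE_mul.
  by apply: le_trans (cabs_sum _ _) _; apply: ler_sum => s _; rewrite cabsM.
rewrite exchange_big /=; apply: ler_sum => s _; rewrite mulr_sumr.
by apply: ler_sum => q _; rewrite mulrA.
Qed.

Variables (I : finType) (A : I -> 'M[R[i]]_n.+1) (H : pred 'I_n.+1).
Variables (lam th b : R).
Hypotheses (th_ge0 : 0 <= th) (th_lt_lam : th < lam) (b_ge0 : 0 <= b).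
Hypothesis low_rows : forall r p, ~~ H p ->
  \sum_q cabs (A r p q) * w q <= th * w p /\ {in H, forall q, A r p q = 0}.
Hypothesis high_rows : forall r p, H p ->
  \sum_(q | H q) cabs (A r p q) * w q <= lam * w p
  /\ \sum_(q | ~~ H q) cabs (A r p q) * w q <= b * w p.

Let D := b / (lam - th).

(* On [H]-rows, [bound] solves [B (m.+1) = lam * B m + b * th ^+ m], [B 0 = 1]:
   the [H]-block grows like [lam ^+ m] and is fed by the other rows, which
   decay like [th ^+ m]. *)
Let bound m p := if H p then (D + 1) * lam ^+ m - D * th ^+ m else th ^+ m.

Let lam_ge0 : 0 <= lam. Proof. exact: le_trans th_ge0 (ltW th_lt_lam). Qed.

Let D_ge0 : 0 <= D. Proof. by rewrite divr_ge0 // subr_ge0 ltW. Qed.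

Let bound_ge0 m p : 0 <= bound m p.
Proof.
rewrite /bound; case: (H p); last exact: exprn_ge0.
have : th ^+ m <= lam ^+ m by rewrite lerXn2r // ?nnegrE ltW.
have := exprn_ge0 m th_ge0; have := D_ge0; nra.
Qed.

Let bound_le m p : bound m p <= (D + 1) * lam ^+ m.
Proof.
rewrite /bound; case: (H p); first by rewrite gerBl mulr_ge0 ?exprn_ge0.
have : th ^+ m <= lam ^+ m by rewrite lerXn2r // ?nnegrE ltW.
have := exprn_ge0 m lam_ge0; have := D_ge0; nra.
Qed.

Let weighted_rowsum_prod_bound m (f : 'I_m -> I) p :
  \sum_q cabs ((\prod_l A (f l)) p q) * w q <= bound m p * w p.
Proof.
elim: m f p => [|m IH] f p.
  rewrite big_ord0 -idmxE (bigD1 p) //= mxE eqxx cabs_nat mul1r big1 ?addr0 => [|q qp].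
    by rewrite /bound; case: (H p); rewrite !expr0 ?mul1r // !mulr1 (addrC D) addrK mul1r.
  by rewrite mxE eq_sym (negbTE qp) cabs0 mul0r.
rewrite (big_ord_recl m); apply: le_trans (weighted_rowsum_mul _ _ _) _.
set r := f ord0; have {}IH := IH (fun l => f (lift ord0 l)).
have tail_le (P : pred 'I_n.+1) (c : R) : (forall s, P s -> bound m s <= c) ->
    \sum_(s | P s) cabs (A r p s) * (\sum_q cabs ((\prod_l A (f (lift ord0 l))) s q) * w q)
    <= c * \sum_(s | P s) cabs (A r p s) * w s.
  move=> le_c; rewrite mulr_sumr; apply: ler_sum => s Ps.
  rewrite mulrCA ler_wpM2l ?cabs_ge0 //; apply: le_trans (IH s) _.
  by rewrite ler_wpM2r ?le_c.
case Hp: (H p).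
- have [Hrow Lrow] := high_rows r p Hp; rewrite (bigID H) /=.
  have bound_p := bound_ge0 m p; rewrite /bound Hp in bound_p *.
  apply: le_trans (lerD (tail_le _ ((D + 1) * lam ^+ m - D * th ^+ m) _)
                        (tail_le _ (th ^+ m) _)) _.
  + by move=> s Hs; rewrite /bound Hs.
  + by move=> s /negbTE Hs; rewrite /bound Hs.
  apply: le_trans (lerD (ler_wpM2l bound_p Hrow)
                        (ler_wpM2l (exprn_ge0 m th_ge0) Lrow)) _.
  have DE : D * (lam - th) = b by rewrite /D divfK // subr_eq0 gt_eqF.
  by rewrite -DE !exprS le_eqVlt; apply/orP; left; apply/eqP; ring.
- have [Lrow zeroH] := low_rows r p (negbT Hp).
  rewrite [leLHS](bigID H) /= big1 ?add0r => [|s Hs]; last by rewrite zeroH ?cabs0 ?mul0r.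
  apply: le_trans (tail_le _ (th ^+ m) _) _; first by move=> s /negbTE Hs; rewrite /bound Hs.
  rewrite /bound Hp exprSr -mulrA ler_wpM2l ?exprn_ge0 //.
  by apply: le_trans Lrow; apply: ler_sum_subset => // q; rewrite mulr_ge0 ?cabs_ge0.
Qed.

Lemma weighted_rowsum_prod_le m (f : 'I_m -> I) p :
  \sum_q cabs ((\prod_l A (f l)) p q) * w q <= (D + 1) * lam ^+ m * w p.
Proof.
by apply: le_trans (weighted_rowsum_prod_bound _ f p) _; rewrite ler_wpM2r ?bound_le.
Qed.

End WeightedRowSums.

Lemma exists_offdiag_weights {R : realType} {I : finType} {n}
    (A : I -> 'M[R[i]]_n.+1) (e : R) :
  (forall r, upper_triangular (A r)) -> 0 < e ->
  exists2 w : 'I_n.+1 -> R, (forall p, 1 <= w p) &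
    forall r p, \sum_(q | q != p) cabs (A r p q) * w q <= e * w p.
Proof.
move=> uA e_gt0; pose S := \sum_r \sum_p \sum_q cabs (A r p q).
have row_le r p : \sum_q cabs (A r p q) <= S.
  apply: le_trans (ler_sum_term (fun p => \sum_q cabs (A r p q)) p _) _.
    by move=> p'; apply: sumr_ge0 => q _; exact: cabs_ge0.
  apply: (ler_sum_term (fun r => \sum_p \sum_q cabs (A r p q))) => r'.
  by do 2!(apply: sumr_ge0 => ? _); exact: cabs_ge0.
have S_ge0 : 0 <= S by do 3!(apply: sumr_ge0 => ? _); exact: cabs_ge0.
pose K := S / e + 1.
have K_ge1 : 1 <= K by rewrite lerDr divr_ge0 // ltW.
have K_gt0 : 0 < K := lt_le_trans ltr01 K_ge1.
(* With [w p = K ^+ (n - p)], entries right of the diagonal are damped by the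
   factor [K], which beats the row sums (at most [S]) once [K > S / e]. *)
exists (fun p => K ^+ (n - p)) => [p|r p]; first exact: exprn_ege1.
have later_le q : q != p ->
    cabs (A r p q) * K ^+ (n - q) <= cabs (A r p q) * (K ^+ (n - p) / K).
  move=> qp; have [lt_qp|le_pq] := ltnP q p; first by rewrite uA // cabs0 !mul0r.
  have lt_pq : (p < q)%N by rewrite ltn_neqAle eq_sym qp.
  rewrite ler_wpM2l ?cabs_ge0 // ler_pdivlMr // -exprSr ler_weXn2l //.
  by have := ltn_ord q; lia.
apply: le_trans (ler_sum _ later_le) _; rewrite -mulr_suml.
have offdiag_le : \sum_(q | q != p) cabs (A r p q) <= S.
  by apply: le_trans (row_le r p); apply: ler_sum_subset => // q; exact: cabs_ge0.
apply: le_trans (ler_wpM2r _ offdiag_le) _; first by rewrite divr_ge0 ?exprn_ge0 ?ltW.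
rewrite mulrCA [e * _]mulrC ler_wpM2l ?exprn_ge0 // ltW // ltr_pdivrMr // /K.
by rewrite mulrDr mulr1 mulrCA divff ?gt_eqF // mulr1 ltrDl.
Qed.

Lemma cabs_entry_le_mxnorm {R : realType} {n} (M : 'M[R[i]]_n) p q :
  cabs (M p q) <= mxnorm M.
Proof.
apply: le_trans (le_bigmax _ (fun p => \sum_q cabs (M p q)) p).
by apply: (ler_sum_term (fun q => cabs (M p q))) => q'; exact: cabs_ge0.
Qed.

Lemma mxnorm_le_weighted {R : realType} {n} (M : 'M[R[i]]_n.+1)
    (w : 'I_n.+1 -> R) (C : R) :
  0 <= C -> (forall p, 1 <= w p) ->
  (forall p, \sum_q cabs (M p q) * w q <= C * w p) -> mxnorm M <= C * \sum_p w p.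
Proof.
move=> C_ge0 w_ge1 rows; have w_ge0 p : 0 <= w p := le_trans ler01 (w_ge1 p).
apply: bigmax_le => [|p _]; first by rewrite mulr_ge0 //; apply: sumr_ge0.
apply: le_trans (ler_sum _ (fun q _ => ler_peMr (cabs_ge0 _) (w_ge1 q))) _.
by apply: le_trans (rows p) _; rewrite ler_wpM2l // ler_sum_term.
Qed.

(* Rows of [H] whose diagonal modulus reaches [lam] are allowed as long as
   they have no entry in a later row of [H]: a product then never chains two
   of them, so no polynomial factor [m] appears in front of [lam ^+ m]. *)
Lemma upper_triangular_prod_bound {R : realType} {I : finType} {n}
    (A : I -> 'M[R[i]]_n.+1) (H : pred 'I_n.+1) (lam : R) :
  0 < lam -> (forall r, upper_triangular (A r)) ->
  (forall r p, ~~ H p -> cabs (A r p p) < lam /\ {in H, forall q, A r p q = 0}) ->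
  (forall r p, H p -> cabs (A r p p) < lam \/
     cabs (A r p p) <= lam /\ (forall q : 'I_n.+1, (p < q)%N -> H q -> A r p q = 0)) ->
  exists K, forall m (f : 'I_m -> I), mxnorm (\prod_l A (f l)) <= K * lam ^+ m.
Proof.
move=> lam_gt0 uA low high.
have [d d_gt0 gap] := exists_uniform_gap
  (fun t : I * 'I_n.+1 => cabs (A t.1 t.2 t.2) < lam)
  (fun t => cabs (A t.1 t.2 t.2)) (fun=> lam) (fun t lt => lt).
pose e := Num.min d lam / 2.
have e_gt0 : 0 < e by rewrite divr_gt0 // lt_min d_gt0.
have e_le_lam : e <= lam / 2 by rewrite ler_pM2r // ge_min lexx orbT.
have gap_e r p : cabs (A r p p) < lam -> cabs (A r p p) + 2 * e <= lam.
  move=> lt_lam; apply: le_trans (gap (r, p) lt_lam).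
  by rewrite lerD2l mulrC divfK // ge_min lexx.
have [w w_ge1 offdiag] := exists_offdiag_weights A e uA e_gt0.
have w_ge0 p : 0 <= w p := le_trans ler01 (w_ge1 p).
have rowsum r p : \sum_q cabs (A r p q) * w q <= (cabs (A r p p) + e) * w p.
  by rewrite (bigD1 p) //= mulrDl lerD2l offdiag.
have low_rows r p : ~~ H p ->
    \sum_q cabs (A r p q) * w q <= (lam - e) * w p /\ {in H, forall q, A r p q = 0}.
  move=> Hp; have [lt_lam zeroH] := low r p Hp; split=> //.
  apply: le_trans (rowsum r p) _; rewrite ler_wpM2r //.
  by have := gap_e r p lt_lam; lra.
have high_rows r p : H p ->
    \sum_(q | H q) cabs (A r p q) * w q <= lam * w p
    /\ \sum_(q | ~~ H q) cabs (A r p q) * w q <= e * w p.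
  move=> Hp; split; last first.
    apply: le_trans (offdiag r p); apply: ler_sum_subset => [q|q].
      by rewrite mulr_ge0 ?cabs_ge0.
    by apply: contraNneq => ->.
  case: (high r p Hp) => [lt_lam | [le_lam zero_later]].
    have sub : \sum_(q | H q) cabs (A r p q) * w q <= \sum_q cabs (A r p q) * w q.
      by apply: ler_sum_subset => // q; rewrite mulr_ge0 ?cabs_ge0.
    apply: le_trans sub (le_trans (rowsum r p) _).
    by rewrite ler_wpM2r //; have := gap_e r p lt_lam; lra.
  rewrite (bigD1 p) //= big1 ?addr0 ?ler_wpM2r // => q /andP[Hq qp].
  have [lt_qp|le_pq] := ltnP q p; first by rewrite uA ?cabs0 ?mul0r.
  by rewrite zero_later ?cabs0 ?mul0r // ltn_neqAle eq_sym qp.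
have th_ge0 : 0 <= lam - e by lra.
have th_lt_lam : lam - e < lam by lra.
have bound := @weighted_rowsum_prod_le _ _ w w_ge0 _ A H _ _ _
  th_ge0 th_lt_lam (ltW e_gt0) low_rows high_rows.
set K := e / (lam - (lam - e)) + 1 in bound.
have K_ge0 : 0 <= K by rewrite /K addr_ge0 // divr_ge0 ?ltW //; lra.
exists (K * \sum_p w p) => m f; rewrite mulrAC.
apply: (mxnorm_le_weighted _ _ _ _ w_ge1 (bound m f)).
by rewrite mulr_ge0 // exprn_ge0 // ltW.
Qed.

Section RootLimit.
Import numFieldNormedType.Exports.
Local Open Scope classical_set_scope.
Context {R : realType}.

Lemma bernoulli_ineq m (x : R) : 0 <= x -> 1 + m%:R * x <= (1 + x) ^+ m.
Proof.
move=> x_ge0; elim: m => [|m IH]; first by rewrite mul0r addr0 expr0.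
rewrite exprS -natr1 mulrDl mul1r.
have : 0 <= m%:R * x by rewrite mulr_ge0.
nra.
Qed.

Lemma exprnK_powR (x : R) m : 0 <= x -> (0 < m)%N -> (x ^+ m) `^ (m%:R)^-1 = x.
Proof.
move=> x_ge0 m_gt0; rewrite -powR_mulrn // -powRrM mulfV ?powRr1 //.
by rewrite pnatr_eq0 -lt0n.
Qed.

Lemma cvg_root_of_geometric_bounds (s : nat -> R) (rho : R) : 0 < rho ->
  (forall m, rho ^+ m <= s m) ->
  (forall e, 0 < e -> exists K, forall m, s m <= K * (rho + e) ^+ m) ->
  (fun m => s m `^ (m%:R)^-1) @ \oo --> rho.
Proof.
move=> rho_gt0 lower upper; apply/cvgrPdist_le => eps eps_gt0.
have [K upperK] := upper (eps / 2) (ltac:(lra)).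
(* (rho + eps)^m beats K (rho + eps/2)^m once q^m >= K, q being their ratio. *)
have half_gt0 : 0 < rho + eps / 2 by rewrite addr_gt0 // divr_gt0.
set q := (rho + eps) / (rho + eps / 2).
have q1_gt0 : 0 < q - 1 by rewrite subr_gt0 /q ltr_pdivlMr // mul1r; lra.
near=> m.
have m_large : K / (q - 1) <= m%:R by near: m; exact: nbhs_infty_ger.
have m_gt0 : (0 < m)%N by near: m; exact: (nbhs_infty_gt 0).
have K_le : K <= q ^+ m.
  have := bernoulli_ineq m _ (ltW q1_gt0); rewrite addrCA subrr addr0.
  by rewrite ler_pdivrMr // in m_large; nra.
have s_lower := lower m.
have rho_m_ge0 : 0 <= rho ^+ m by rewrite exprn_ge0 // ltW.
have s_ge0 : 0 <= s m := le_trans rho_m_ge0 s_lower.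
have s_upper : s m <= (rho + eps) ^+ m.
  apply: le_trans (upperK m) _.
  have -> : rho + eps = q * (rho + eps / 2) by rewrite /q divfK // gt_eqF.
  by rewrite exprMn ler_wpM2r // exprn_ge0 // ltW.
have inv_ge0 : 0 <= (m%:R : R)^-1 by rewrite invr_ge0.
have root_lower : rho <= s m `^ (m%:R)^-1.
  by rewrite -{1}(exprnK_powR _ _ (ltW rho_gt0) m_gt0); apply: ge0_ler_powR.
have root_upper : s m `^ (m%:R)^-1 <= rho + eps.
  have rho_eps_ge0 : 0 <= rho + eps by rewrite addr_ge0 // ltW.
  rewrite -(exprnK_powR _ _ rho_eps_ge0 m_gt0); apply: ge0_ler_powR => //.
  by rewrite nnegrE exprn_ge0.
rewrite ler_norml; apply/andP; split; lra.
Unshelve. all: by end_near.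
Qed.

End RootLimit.

Lemma mxnorm_ge0 {R : realType} {n} (M : 'M[R[i]]_n.+1) : 0 <= mxnorm M.
Proof. exact: le_trans (cabs_ge0 _) (cabs_entry_le_mxnorm M ord0 ord0). Qed.

Lemma mxnorm_const_wordprod_ge {R : realType} {n} (G : bool -> 'M[R[i]]_n.+1) r p m :
  (forall r, upper_triangular (G r)) ->
  cabs (G r p p) ^+ m <= mxnorm (wordprod G ([ffun=> r] : {ffun 'I_m -> bool})).
Proof.
move=> uG; apply: le_trans (cabs_entry_le_mxnorm _ p p).
rewrite /wordprod upper_triangular_prod_diag => [|l]; last exact: uG.
rewrite cabs_prod (eq_bigr (fun=> cabs (G r p p))) ?prodr_const ?card_ord //.
by move=> l _; rewrite ffunE.
Qed.

Lemma jsr_is_upper_triangular {R : realType} {n} (G : bool -> 'M[R[i]]_n.+1) (rho : R) :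
  0 < rho -> (forall r, upper_triangular (G r)) ->
  (forall r p, cabs (G r p p) <= rho) -> (exists r p, cabs (G r p p) = rho) ->
  jsr_is G rho.
Proof.
move=> rho_gt0 uG diag_le [r [p diag_eq]].
apply: cvg_root_of_geometric_bounds => // [m|e e_gt0].
  rewrite -diag_eq; apply: le_trans (mxnorm_const_wordprod_ge G r p m uG) _.
  exact: (le_bigmax _ (fun f => mxnorm (wordprod G f))).
have [|||K prod_le] := upper_triangular_prod_bound G predT (rho + e) _ uG.
- by rewrite addr_gt0.
- by [].
- by move=> r' p' _; left; rewrite (le_lt_trans (diag_le r' p')) // ltrDl.
exists K => m; apply: bigmax_le => [|f _]; last exact: prod_le.
by apply: le_trans (prod_le m [ffun=> true]); exact: mxnorm_ge0.
Qed.

Section Amat.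
Variables (R : realType) (k : nat) (c : nat -> R[i]) (alpha beta : R) (x1 : R[i]).
Hypotheses (alpha_gt0 : 0 < alpha) (beta_gt0 : 0 < beta) (k_gt0 : (0 < k)%N).
Local Notation A := (Amat k c alpha beta x1).

Lemma Amat_upper_triangular r : upper_triangular (A r).
Proof.
move=> p q lt_qp; have := ltn_ord p; have := ltn_ord q; rewrite mxE.
case: eqP => [p0|/eqP p0]; first by move: lt_qp; rewrite p0.
case: eqP => [pk|/eqP pk] => q_lt p_lt.
  by rewrite (_ : (q == k.+1 :> nat) = false) //; apply/eqP; lia.
case: ifP => // /norP[q0 qk]; rewrite /acoef; case: r.
  by rewrite bin_small ?mul0n //; lia.
by case: eqP => // e; lia.
Qed.

Lemma Amat_diag r (p : 'I_k.+2) :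
  A r p p = if p == 0 :> nat then ((if r then alpha else beta)%:C)%C
            else if p == k.+1 :> nat then (~~ r)%:R else (2 ^ (k - p))%:R.
Proof.
rewrite mxE; case: (p == 0 :> nat); first by case: r.
case: (p == k.+1 :> nat) => /=; first by case: r.
by rewrite /acoef; case: r; rewrite ?binn ?mul1n ?eqxx.
Qed.

Lemma Amat_mid_last r (p q : 'I_k.+2) :
  p != 0 :> nat -> p != k.+1 :> nat -> q = k.+1 :> nat -> A r p q = 0.
Proof. by move=> /negbTE p0 /negbTE pk qk; rewrite mxE p0 pk qk eqxx orbT. Qed.

Lemma cabs_Amat_diag0 r : cabs (A r ord0 ord0) = if r then alpha else beta.
Proof. by rewrite Amat_diag; case: r; rewrite cabs_real gtr0_norm. Qed.

Lemma cabs_Amat_diag_le r (p : 'I_k.+2) j :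
  (0 < j <= p)%N -> (j <= k)%N -> cabs (A r p p) <= 2 ^+ (k - j).
Proof.
move=> /andP[j_gt0 le_jp] le_jk; have two_ge1 : (1 : R) <= 2 by rewrite ler1n.
rewrite Amat_diag (_ : (p == 0 :> nat) = false); last by apply/eqP; lia.
case: eqP => _.
  by rewrite cabs_nat; apply: le_trans (exprn_ege1 _ two_ge1); case: r.
by rewrite cabs_nat natrX ler_weXn2l //; lia.
Qed.

Lemma cabs_Amat_diag1 r : cabs (A r (lift ord0 ord0) (lift ord0 ord0)) = 2 ^+ k.-1.
Proof. by rewrite Amat_diag /= ltn_eqF ?ltnS // cabs_nat natrX subn1. Qed.

Lemma eigenvalue_Amat_sum z :
  eigenvalue (A false + A true) z <->
  z = ((alpha + beta)%:C)%C \/ exists2 j : nat, (j <= k)%N & z = 2 ^+ j.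
Proof.
have uC : upper_triangular (A false + A true).
  by move=> p q lt_qp; rewrite mxE !Amat_upper_triangular ?addr0.
have diagC (p : 'I_k.+2) : (A false + A true) p p =
    if p == 0 :> nat then ((alpha + beta)%:C)%C
    else if p == k.+1 :> nat then 1 else 2 ^+ (k - p).+1.
  rewrite mxE !Amat_diag; case: ifP => _; first by rewrite addrC -rmorphD.
  by case: ifP => _; rewrite ?addr0 // -natrD addnn -mul2n -expnS natrX.
rewrite eigenvalue_upper_triangular //; split.
  move=> /existsP[p /eqP->]; rewrite diagC.
  case: ifP => p0; [by left | right]; case: ifP => pk; first by exists 0%N.
  by exists (k - p).+1 => //; have := ltn_ord p; move/negbT: p0; lia.
move=> [->|[[|j] le_jk ->]]; apply/existsP.
- by exists ord0; rewrite diagC.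
- by exists ord_max; rewrite diagC /= eqxx.
have lt_kj : (k - j < k.+2)%N by lia.
exists (Ordinal lt_kj); rewrite diagC /= ifF; last by apply/eqP; lia.
by rewrite ifF ?subKn 1?ltnW //; apply/eqP; lia.
Qed.

Lemma cabs_Amat_diag_lower_le r (p : 'I_k.+2) :
  p != 0 :> nat -> cabs (A r p p) <= 2 ^+ k.-1.
Proof. by move=> p0; rewrite -subn1; apply: cabs_Amat_diag_le; lia. Qed.

Lemma cabs_Amat_diag_top_le r :
  cabs (A r ord0 ord0) <= Num.max alpha beta.
Proof. by rewrite cabs_Amat_diag0; case: r; rewrite le_max lexx ?orbT. Qed.

Lemma Amat_jsr : jsr_is A (Num.max alpha (Num.max beta (2 ^+ k.-1))).
Proof.
apply: jsr_is_upper_triangular => [||r p|].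
- by rewrite lt_max alpha_gt0.
- exact: Amat_upper_triangular.
- have [p0|p0] := eqVneq (p : nat) 0.
    rewrite (_ : p = ord0); last exact: val_inj.
    by rewrite maxA le_max cabs_Amat_diag_top_le.
  by rewrite !le_max cabs_Amat_diag_lower_le ?orbT.
have [_|_] := leP beta (2 ^+ k.-1); have [_|_] := leP alpha _.
- by exists true, (lift ord0 ord0); exact: cabs_Amat_diag1.
- by exists true, ord0; exact: cabs_Amat_diag0.
- by exists false, ord0; exact: cabs_Amat_diag0.
- by exists true, ord0; exact: cabs_Amat_diag0.
Qed.

Lemma Amat_simple_growth_top :
  2 ^+ k.-1 < Num.max alpha beta -> simple_growth A (Num.max alpha beta).
Proof.
move=> lt_sM; have M_gt0 : 0 < Num.max alpha beta by rewrite lt_max alpha_gt0.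
have [|||K bound] := upper_triangular_prod_bound A (fun p => p == 0 :> nat) _ M_gt0.
- exact: Amat_upper_triangular.
- move=> r p /= p0; split; first exact: le_lt_trans (cabs_Amat_diag_lower_le r p p0) lt_sM.
  by move=> q /eqP q0; apply: Amat_upper_triangular; rewrite q0 lt0n.
- move=> r p /eqP p0; right; split=> [|q lt_pq /eqP q0]; last by lia.
  by rewrite (_ : p = ord0) ?cabs_Amat_diag_top_le //; exact: val_inj.
by exists K => m f; exact: bound.
Qed.

(* The diagonal entry [2^(k-1)] sits in row 1, and for [k = 1] also in the
   last row; [H] keeps both together with the top row, which is harmless
   because row 1 has no entry in the last column. *)
Lemma Amat_simple_growth_block :
  Num.max alpha beta < 2 ^+ k.-1 -> simple_growth A (2 ^+ k.-1).
Proof.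
move=> lt_Ms; have s_gt0 : (0 : R) < 2 ^+ k.-1 by rewrite exprn_gt0.
pose H := fun p : 'I_k.+2 => (p <= 1)%N || (p == k.+1 :> nat).
have [|||K bound] := upper_triangular_prod_bound A H _ s_gt0.
- exact: Amat_upper_triangular.
- move=> r p /norP[/negbTE p_gt1 /eqP pk]; split.
    have le_pk := ltn_ord p; apply: le_lt_trans (cabs_Amat_diag_le r p 2 _ _) _.
    + by move/negbT: p_gt1; lia.
    + by lia.
    by rewrite ltr_eXn2l ?ltr1n //; lia.
  move=> q /orP[le_q1|/eqP qk]; last by apply: Amat_mid_last => //; apply/eqP; lia.
  by apply: Amat_upper_triangular; lia.
- move=> r p _; have [p0|p0] := eqVneq (p : nat) 0.
    left; rewrite (_ : p = ord0); last exact: val_inj.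
    exact: le_lt_trans (cabs_Amat_diag_top_le r) lt_Ms.
  right; split=> [|q lt_pq /orP[le_q1|/eqP qk]]; first exact: cabs_Amat_diag_lower_le.
    by lia.
  by apply: Amat_mid_last => //; apply/eqP; lia.
by exists K => m f; exact: bound.
Qed.

End Amat.

Theorem mainTheorem8 (R : realType) (k : nat) (c : nat -> R[i])
  (alpha beta : R) (x1 : R[i]) :
  0 < alpha -> 0 < beta -> (1 <= k)%N -> c k != 0 ->
  let A := Amat k c alpha beta x1 in
  let rho := Num.max alpha (Num.max beta (2 ^+ k.-1)) in
  [/\ jsr_is A rho,
      (forall z : R[i], eigenvalue (A false + A true) z <->
         (z = ((alpha + beta)%:C)%C \/ exists2 j : nat, (j <= k)%N & z = 2 ^+ j))
    & (Num.max alpha beta != 2 ^+ k.-1 -> simple_growth A rho)].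
Proof.
move=> alpha_gt0 beta_gt0 k_gt0 _ A rho.
split; [exact: Amat_jsr | exact: eigenvalue_Amat_sum |].
rewrite neq_lt => /orP[lt_Ms|lt_sM].
- have -> : rho = 2 ^+ k.-1 by rewrite /rho maxA max_r // ltW.
  exact: Amat_simple_growth_block.
- have -> : rho = Num.max alpha beta by rewrite /rho maxA max_l // ltW.
  exact: Amat_simple_growth_top.
Qed.
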